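(* Let $q_0$ and $q_1$ be quadratic linking functions on a finite abelian group $G$. Then $q_0$ is isometric to $q_1$ if and only if $(b(q_0),\beta(q_0))\cong(b(q_1),\beta(q_1))$ and $K(q_0)=K(q_1)$.
   Context: A linking form on a finite abelian group $G$ is a symmetric bilinear map $b:G\times G\to\mathbb{Q}/\mathbb{Z}$ that is nonsingular ($b(x,y)=0$ for all $x$ implies $y=0$). A quadratic linking function on $G$ is a map $q:G\to\mathbb{Q}/\mathbb{Z}$ such that $b(q)(x,y):=q(x+y)-q(x)-q(y)$ is a linking form; $q$ is a quadratic linking form if moreover $q(-x)=q(x)$. For $a\in G$, $q_a(x):=q(x)+b(q)(x,a)$. Every quadratic linking function can be written $q=q^o_a$ with $q^o$ a quadratic linking form refining $b(q)$ and $a\in G$; $\beta(q):=2a$ is independent of this choice. An isomorphism $(b_0,\beta_0)\cong(b_1,\beta_1)$ is a group automorphism $\theta$ of $G$ with $b_1(\theta x,\theta y)=b_0(x,y)$ and $\theta(\beta_0)=\beta_1$. $q_0$ and $q_1$ are isometric if $q_1\circ\theta=q_0$ for some automorphism $\theta$. The Kervaire–Arf invariant is $K(q)=\arg(GS(q))/2\pi\in\mathbb{Q}/\mathbb{Z}$, where $GS(q)=\sum_{x\in G}\exp(2\pi i\,q(x))$ (this sum is nonzero). *)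

From Stdlib Require Import ClassicalEpsilon.
From mathcomp Require Import all_boot all_order all_algebra.
From mathcomp Require Import complex.
From mathcomp Require Import reals trigo Rstruct.
Set Implicit Arguments.
Unset Strict Implicit.
Unset Printing Implicit Defensive.
Import GRing.Theory Num.Theory.
Local Open Scope ring_scope.

(* Q/Z-valued maps are modelled as rat-valued maps; equality in Q/Z is
   congruence modulo the integers. *)
Definition eqQZ (x y : rat) : Prop := (x - y) \is a Num.int.

Definition is_aut (G : finZmodType) (th : G -> G) : Prop :=
  {morph th : x y / x + y} /\ bijective th.

Definition linking_form (G : finZmodType) (b : G -> G -> rat) : Prop :=
  [/\ (forall x y, eqQZ (b x y) (b y x)),
      (forall x y z, eqQZ (b (x + y) z) (b x z + b y z)),
      (forall x y z, eqQZ (b x (y + z)) (b x y + b x z)) &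
      (forall y, (forall x, eqQZ (b x y) 0) -> y = 0)].

Definition bq (G : finZmodType) (q : G -> rat) (x y : G) : rat :=
  q (x + y) - q x - q y.

Definition quad_linking_function (G : finZmodType) (q : G -> rat) : Prop :=
  linking_form (bq q).

Definition quad_linking_form (G : finZmodType) (q : G -> rat) : Prop :=
  quad_linking_function q /\ (forall x, eqQZ (q (- x)) (q x)).

Definition qshift (G : finZmodType) (q : G -> rat) (a : G) (x : G) : rat :=
  q x + bq q x a.

(* beta(q) := 2a where q = q^o_a with q^o a quadratic linking form refining b(q)
   (the choice of a is made by Hilbert's epsilon; the paper shows 2a does
   not depend on the choice). *)
Definition beta (G : finZmodType) (q : G -> rat) : G :=
  let a := epsilon (inhabits (0 : G))
     (fun a => exists qo : G -> rat,
        [/\ quad_linking_form qo,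
            (forall x y, eqQZ (bq qo x y) (bq q x y)) &
            (forall x, eqQZ (q x) (qshift qo a x))]) in
  a + a.

Definition iso_pair (G : finZmodType) (b0 : G -> G -> rat) (beta0 : G)
    (b1 : G -> G -> rat) (beta1 : G) : Prop :=
  exists th : G -> G,
    [/\ is_aut th, (forall x y, eqQZ (b1 (th x) (th y)) (b0 x y)) & th beta0 = beta1].

Definition isometric (G : finZmodType) (q0 q1 : G -> rat) : Prop :=
  exists th : G -> G, is_aut th /\ (forall x, eqQZ (q1 (th x)) (q0 x)).

Definition RR := Rdefinitions.R.

Local Open Scope complex_scope.

Definition expi (t : RR) : RR[i] := cos (2 * pi * t) +i* sin (2 * pi * t).

Definition GS (G : finZmodType) (q : G -> rat) : RR[i] :=
  \sum_(x : G) expi (ratr (q x)).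

(* Kervaire-Arf invariant K(q) = arg(GS(q)) / 2pi, normalized in [0,1)
   (i.e. the representative in [0,1) of the class in Q/Z). *)
Definition Kinv (G : finZmodType) (q : G -> rat) : RR :=
  epsilon (inhabits (0 : RR))
    (fun t => (0 <= t < 1)%R /\ GS q = `|GS q| * expi t).

(* An isometry transports b and beta and permutes the terms of the Gauss sum,
   which gives the direct implication.  Conversely, after composing q1 with
   theta we may assume b(q0) = b(q1); then q1 - q0 is a Q/Z-valued character,
   so by nondegeneracy q1 = (q0)_c, where (q0)_c(x) = q0(x + c) - q0(c).
   Since beta((q0)_c) = beta(q0) + 2c, equality of the beta's forces 2c = 0;
   since GS((q0)_c) = e(-q0(c)) GS(q0) with GS(q0) <> 0, equality of the
   Kervaire-Arf invariants forces q0(c) in Z.  Then x |-> e(b(x,c)) is a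
   character of order at most 2, and adding c exactly off its kernel is an
   automorphism carrying q0 to (q0)_c.  Character orthogonality supplies the
   duality "every character vanishing on the n-torsion is b(-, n a)", which
   gives both the shift c and the characterisation of beta(q) by
   q(x) - q(-x) = b(x, beta(q)) in Q/Z. *)

From mathcomp Require Import all_boot all_order all_algebra.
From mathcomp Require Import complex reals Rstruct trigo.
From Stdlib Require Import ClassicalEpsilon Setoid Morphisms.
From mathcomp Require Import ring lra.
Set Implicit Arguments.
Unset Strict Implicit.
Unset Printing Implicit Defensive.
Import Order.TTheory GRing.Theory Num.Theory.
Local Open Scope ring_scope.

Lemma eqQZ_refl x : eqQZ x x.
Proof. by rewrite /eqQZ subrr int_num0. Qed.

Lemma eqQZ_sym x y : eqQZ x y -> eqQZ y x.
Proof. by rewrite /eqQZ -opprB rpredN. Qed.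

Lemma eqQZ_trans x y z : eqQZ x y -> eqQZ y z -> eqQZ x z.
Proof. by rewrite /eqQZ => h1 h2; rewrite -(subrKA y) rpredD. Qed.

#[local] Hint Resolve eqQZ_refl : core.

Add Relation rat eqQZ
  reflexivity proved by eqQZ_refl
  symmetry proved by eqQZ_sym
  transitivity proved by eqQZ_trans as eqQZ_equivalence.

Add Morphism (@GRing.add rat) with signature eqQZ ==> eqQZ ==> eqQZ as eqQZ_add.
Proof. by rewrite /eqQZ => a b hab c d hcd; rewrite opprD addrACA rpredD. Qed.

Add Morphism (@GRing.opp rat) with signature eqQZ ==> eqQZ as eqQZ_opp.
Proof. by rewrite /eqQZ => a b hab; rewrite -opprD rpredN. Qed.

Add Morphism (@GRing.natmul rat) with signature eqQZ ==> eq ==> eqQZ as eqQZ_natmul.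
Proof. by rewrite /eqQZ => a b hab n; rewrite -mulrnBl rpredMn. Qed.

Lemma eqQZ_eq x y : x = y -> eqQZ x y.
Proof. by move->. Qed.

Lemma eqQZ_int0 x : x \is a Num.int -> eqQZ x 0.
Proof. by rewrite /eqQZ subr0. Qed.

Lemma eqQZ_subr0 x y : eqQZ (x - y) 0 <-> eqQZ x y.
Proof. by rewrite /eqQZ subr0. Qed.

Local Open Scope complex_scope.

Lemma expiD (x y : RR) : expi (x + y) = expi x * expi y.
Proof.
rewrite /expi mulrDr cosD sinD.
by apply/eqP; rewrite eq_complex /=; apply/andP; split; apply/eqP; ring.
Qed.

Lemma expi0 : expi 0 = 1.
Proof. by rewrite /expi mulr0 cos0 sin0. Qed.

Lemma norm_expi x : `|expi x| = 1.
Proof. by rewrite /expi /Num.norm /= cos2Dsin2 sqrtr1. Qed.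

Lemma expi1 : expi 1 = 1.
Proof. by rewrite /expi mulr1 -[2]/(2%:R) mulr_natl cos2pi sin2pi. Qed.

Lemma expi_int (k : int) : expi k%:~R = 1.
Proof.
have expi_nat n : expi n%:R = 1.
  by elim: n => [|n IH]; rewrite ?expi0 // -addn1 natrD expiD IH expi1 mulr1.
case: k => n; first exact: expi_nat.
have := expiD (- n.+1%:R) n.+1%:R.
by rewrite addNr expi0 expi_nat mulr1 NegzE rmorphN.
Qed.

Lemma expi_eq1 (x : RR) : 0 <= x < 1 -> expi x = 1 -> x = 0.
Proof.
move=> /andP[x0 x1] [cos1 _].
have pi0 := @pi_gt0 RR.
have cos_eq1 (z : RR) : 0 <= z <= pi -> cos z = 1 -> z = 0.
  move=> z0pi cz; apply: cos_inj; rewrite ?in_itv /= ?cz ?cos0 //.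
  by rewrite lexx ltW.
have [le_y_pi|lt_pi_y] := lerP (2 * pi * x) pi.
  have /eqP : 2 * pi * x = 0 by apply: cos_eq1 => //; rewrite le_y_pi andbT; nra.
  by rewrite !mulf_eq0 pnatr_eq0 (gt_eqF pi0) => /eqP.
have : pi *+ 2 - 2 * pi * x = 0.
  apply: cos_eq1; last by rewrite addrC cosD2pi cosN.
  by rewrite -mulr_natl; apply/andP; split; nra.
by rewrite -mulr_natl; nra.
Qed.

Definition expiQ (t : rat) : RR[i] := expi (ratr t).

Lemma expiQ_add s t : expiQ (s + t) = expiQ s * expiQ t.
Proof. by rewrite /expiQ rmorphD expiD. Qed.

Lemma expiQ_int t : t \is a Num.int -> expiQ t = 1.
Proof. by move=> /intrP[k ->]; rewrite /expiQ ratr_int expi_int. Qed.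

Lemma expiQ0 : expiQ 0 = 1.
Proof. exact/expiQ_int/int_num0. Qed.

Lemma expiQ_eqQZ s t : eqQZ s t -> expiQ s = expiQ t.
Proof. by move=> st; rewrite -(subrK t s) expiQ_add expiQ_int ?mul1r. Qed.

Lemma expiQ_eq1 t : expiQ t = 1 -> t \is a Num.int.
Proof.
pose f := t - (Num.floor t)%:~R.
have tf : eqQZ t f by rewrite /eqQZ /f opprB addrC subrK intr_int.
have f01 : (0 : RR) <= ratr f < (1 : RR).
  have f1 : f < 1 by rewrite /f ltrBlDr; have := floorD1_gt t; rewrite intrD addrC.
  by rewrite (ler0q RR) subr_ge0 (floor_le t) /= -(rmorph1 (@ratr RR)) ltr_rat.
rewrite (expiQ_eqQZ tf) => /(expi_eq1 f01) /eqP.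
by rewrite fmorph_eq0 subr_eq0 => /eqP ->; apply: intr_int.
Qed.

Lemma expi_onto (u v : RR) : u ^+ 2 + v ^+ 2 = 1 ->
  exists2 t, 0 <= t < 1 & expi t = u +i* v.
Proof.
move=> uv1; have pi0 := @pi_gt0 RR.
have u1 : -1 <= u <= 1 by apply/andP; split; nra.
have cosu : cos (acos u) = u by apply: acosK; rewrite in_itv.
have sinu : sin (acos u) = `|v| by rewrite sin_acos // -uv1 addrC addKr sqrtr_sqr.
have acos_ge0u := acos_ge0 u1; have acos_lepiu := acos_lepi u1.
have pi2K (x : RR) : 2 * pi * (x / (2 * pi)) = x by rewrite mulrC divfK // mulf_neq0 ?gt_eqF.
have [v0|v0] := lerP 0 v.
  exists (acos u / (2 * pi)); last by rewrite /expi pi2K cosu sinu ger0_norm.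
  by apply/andP; split; [apply: divr_ge0 => //; lra | rewrite ltr_pdivrMr; lra].
have acos_gt0u : 0 < acos u.
  apply: acos_gt0; rewrite (andP u1).1 /= lt_neqAle (andP u1).2 andbT.
  by apply/eqP => u_eq1; move: uv1; rewrite u_eq1; nra.
exists (1 - acos u / (2 * pi)).
  by apply/andP; split; [rewrite subr_ge0 ler_pdivrMr; lra | rewrite ltrBlDr ltrDl divr_gt0 //; lra].
rewrite /expi mulrBr mulr1 pi2K addrC mulr_natl cosD2pi sinD2pi cosN sinN.
by rewrite cosu sinu ltr0_norm // opprK.
Qed.

Lemma polar (z : RR[i]) : exists t, 0 <= t < 1 /\ z = `|z| * expi t.
Proof.
have [->|] := eqVneq z 0; first by exists 0; rewrite normr0 mul0r lexx ltr01.
case: z => a b; rewrite -normr_gt0; set r := Num.sqrt (a ^+ 2 + b ^+ 2).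
have -> : `|a +i* b| = r%:C by [].
rewrite ltcR => r0.
have [|t t01 et] := @expi_onto (a / r) (b / r).
  have s0 : 0 < a ^+ 2 + b ^+ 2 by rewrite -sqrtr_gt0.
  by rewrite !expr_div_n -mulrDl sqr_sqrtr ?divff ?gt_eqF ?ltW.
exists t; split => //; rewrite et.
apply/eqP; rewrite eq_complex /= !mul0r subr0 addr0.
by apply/andP; split; apply/eqP; field; rewrite gt_eqF.
Qed.

Add Morphism expiQ with signature eqQZ ==> eq as expiQ_morph.
Proof. exact: expiQ_eqQZ. Qed.

Section Automorphisms.
Variables (G : finZmodType) (th : G -> G).
Hypothesis th_aut : is_aut th.

Lemma aut_add : {morph th : x y / x + y}.
Proof. by case: th_aut. Qed.

Lemma aut0 : th 0 = 0.
Proof. by apply: (@addrI _ (th 0)); rewrite -aut_add !addr0. Qed.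

Lemma autN x : th (- x) = - th x.
Proof. by apply/eqP; rewrite -addr_eq0 -aut_add addNr aut0. Qed.

Lemma aut_inv : exists2 g, is_aut g & cancel th g /\ cancel g th.
Proof.
have [_ [g thK gK]] := th_aut; exists g => //; split => //; last by exists th.
by move=> x y; apply: (can_inj thK); rewrite aut_add !gK.
Qed.

Lemma aut_comp g : is_aut g -> is_aut (th \o g).
Proof.
by case=> gD g_bij; split; [move=> x y /=; rewrite gD aut_add | apply: bij_comp; case: th_aut].
Qed.

End Automorphisms.

Section Characters.
Variable G : finZmodType.
Implicit Types (l : G -> rat) (x y : G).

Definition homQZ l := forall x y, eqQZ (l (x + y)) (l x + l y).

Lemma homQZ0 l : homQZ l -> eqQZ (l 0) 0.
Proof.
move=> hl; move: (hl 0 0); rewrite addr0 /eqQZ.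
by rewrite opprD addrA subrr add0r rpredN subr0.
Qed.

Lemma homQZN l x : homQZ l -> eqQZ (l (- x)) (- l x).
Proof.
move=> hl; have h := hl x (- x); rewrite subrr (homQZ0 hl) in h.
by rewrite -(addKr (l x) (l (- x))) -h addr0.
Qed.

Lemma homQZ_opp l : homQZ l -> homQZ (fun x => - l x).
Proof. by move=> hl x y; rewrite hl opprD. Qed.

Lemma homQZMn l x n : homQZ l -> eqQZ (l (x *+ n)) (l x *+ n).
Proof.
move=> hl; elim: n => [|n IH]; first exact: homQZ0.
by rewrite !mulrS hl IH.
Qed.

Lemma sum_expiQ_hom l y0 : homQZ l -> ~ eqQZ (l y0) 0 -> \sum_y expiQ (l y) = 0.
Proof.
move=> hl ly0; set S := \sum_y _.
have : S = expiQ (l y0) * S.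
  rewrite /S mulr_sumr (reindex_inj (addIr y0)) /=.
  by apply: eq_bigr => y _; rewrite -expiQ_add hl addrC.
have [//|S0] := eqVneq S 0.
rewrite -[X in X = _]mul1r => /(mulIf S0)/esym/expiQ_eq1/eqQZ_int0/ly0[].
Qed.

Section LinkingForm.
Variables (b : G -> G -> rat) (hb : linking_form b).

Lemma lf_sym x y : eqQZ (b x y) (b y x).
Proof. by case: hb. Qed.

Lemma lf_homl y : homQZ (b^~ y).
Proof. by case: hb => _ h _ _ x z; apply: h. Qed.

Lemma lf_homr x : homQZ (b x).
Proof. by case: hb => _ _ h _; apply: h. Qed.

Lemma lf_addl x y z : eqQZ (b (x + y) z) (b x z + b y z).
Proof. exact: lf_homl. Qed.

Lemma lf_addr x y z : eqQZ (b x (y + z)) (b x y + b x z).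
Proof. exact: lf_homr. Qed.

Lemma lf_0l y : eqQZ (b 0 y) 0.
Proof. exact: homQZ0 (lf_homl y). Qed.

Lemma lf_0r x : eqQZ (b x 0) 0.
Proof. exact: homQZ0 (lf_homr x). Qed.

Lemma lf_Nl x y : eqQZ (b (- x) y) (- b x y).
Proof. exact: homQZN (lf_homl y). Qed.

Lemma lf_Nr x y : eqQZ (b x (- y)) (- b x y).
Proof. exact: homQZN (lf_homr x). Qed.

Lemma lf_Mnl x y n : eqQZ (b (x *+ n) y) (b x y *+ n).
Proof. exact: homQZMn (lf_homl y). Qed.

Lemma lf_Mnr x y n : eqQZ (b x (y *+ n)) (b x y *+ n).
Proof. exact: homQZMn (lf_homr x). Qed.

Lemma lf_eq0 y : (forall x, eqQZ (b x y) 0) -> y = 0.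
Proof. by case: hb => _ _ _; apply. Qed.

Lemma lf_nondeg y : y != 0 -> exists x, ~ eqQZ (b x y) 0.
Proof.
move=> /eqP y0; apply: NNPP => no_x; apply/y0/lf_eq0 => x.
by apply: NNPP => bxy; apply: no_x; exists x.
Qed.

Lemma lf_congr b' : (forall x y, eqQZ (b' x y) (b x y)) -> linking_form b'.
Proof.
move=> bb'; split.
- by move=> x y; rewrite !bb' lf_sym.
- by move=> x y z; rewrite !bb' lf_addl.
- by move=> x y z; rewrite !bb' lf_addr.
- by move=> y hy; apply: lf_eq0 => x; rewrite -bb'.
Qed.

Lemma lf_comp th : is_aut th -> linking_form (fun x y => b (th x) (th y)).
Proof.
move=> th_aut; have [g _ [thK gK]] := aut_inv th_aut.
split=> [x y|x y z|x y z|y hy] /=; rewrite ?aut_add //.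
- exact: lf_sym.
- exact: lf_addl.
- exact: lf_addr.
- apply: (can_inj thK); rewrite aut0 //; apply: lf_eq0 => x.
  by rewrite -[x]gK; apply: hy.
Qed.

Lemma sum_expiQ_lf y : \sum_x expiQ (b y x) = if y == 0 then #|G|%:R else 0.
Proof.
have [->|/lf_nondeg[x bxy]] := eqVneq y 0.
  rewrite -sumr_const; apply: eq_bigr => x _.
  by rewrite lf_0l expiQ0.
by apply: (sum_expiQ_hom (y0 := x) (lf_homr y)) => byx; apply/bxy; rewrite lf_sym.
Qed.

Lemma lf_dual l n : homQZ l -> (forall y, y *+ n = 0 -> eqQZ (l y) 0) ->
  exists a, forall x, eqQZ (l x) (b x (a *+ n)).
Proof.
move=> hl l_tors; apply: NNPP => no_a.
(* Otherwise each row of the double sum below vanishes, whereas its columns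
   add up to #|G| times the number of n-torsion points. *)
have row0 a : \sum_y expiQ (l y - b y (a *+ n)) = 0.
  have [y0 hy0] : exists y0, ~ eqQZ (l y0 - b y0 (a *+ n)) 0.
    apply: NNPP => h; apply: no_a; exists a => x; apply/eqQZ_subr0.
    by apply: NNPP => hx; apply: h; exists x.
  apply: (sum_expiQ_hom _ hy0) => x y.
  by rewrite hl lf_addl opprD addrACA.
have col y : \sum_a expiQ (l y - b y (a *+ n)) = if y *+ n == 0 then #|G|%:R else 0.
  under eq_bigr do rewrite expiQ_add lf_Mnr -lf_Mnl -lf_Nl.
  rewrite -mulr_sumr sum_expiQ_lf oppr_eq0; case: eqP => [/l_tors ->|_]; last exact: mulr0.
  by rewrite expiQ0 mul1r.
have : \sum_a \sum_y expiQ (l y - b y (a *+ n)) = 0 by apply: big1 => a _.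
rewrite exchange_big /=; under eq_bigr do rewrite col.
rewrite -big_mkcond sumr_const -mulrnA => /eqP; rewrite pnatr_eq0 muln_eq0 !eqn0Ngt.
case/orP=> /negP; apply; apply/card_gt0P; exists 0; rewrite ?unfold_in /= ?mul0rn //.
exact/eqP.
Qed.
End LinkingForm.
End Characters.

Section QuadraticFunctions.
Variable G : finZmodType.
Implicit Types (q : G -> rat) (x y : G).
Local Notation qlf := (@quad_linking_function G).

Lemma qlf0 q : qlf q -> eqQZ (q 0) 0.
Proof.
move=> hq; have := lf_0l hq 0; rewrite /bq addr0 subrr sub0r => qN0.
by rewrite -[q 0]opprK qN0 oppr0.
Qed.

Lemma qaddE q x y : q (x + y) = bq q x y + q x + q y.
Proof. by rewrite /bq; ring. Qed.

Lemma qshiftE q a x : qshift q a x = q (x + a) - q a.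
Proof. by rewrite /qshift /bq; ring. Qed.

Lemma bq_congr q q' : (forall x, eqQZ (q' x) (q x)) ->
  forall x y, eqQZ (bq q' x y) (bq q x y).
Proof. by move=> qq' x y; rewrite /bq !qq'. Qed.

Lemma qlf_bq q q' : qlf q -> (forall x y, eqQZ (bq q' x y) (bq q x y)) -> qlf q'.
Proof. by move=> hq; apply: lf_congr. Qed.

Lemma qlf_congr q q' : qlf q -> (forall x, eqQZ (q' x) (q x)) -> qlf q'.
Proof. by move=> hq /bq_congr; apply: qlf_bq. Qed.

Lemma bq_addhom q h : homQZ h ->
  forall x y, eqQZ (bq (fun z => q z + h z) x y) (bq q x y).
Proof.
by move=> hh x y; rewrite /bq hh; apply: eqQZ_eq; ring.
Qed.

Lemma bq_qshift q a : qlf q -> forall x y, eqQZ (bq (qshift q a) x y) (bq q x y).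
Proof. by move=> hq; apply: bq_addhom (lf_homl hq a). Qed.

Lemma qlf_qshift q a : qlf q -> qlf (qshift q a).
Proof. by move=> hq; apply: qlf_bq hq (bq_qshift a hq). Qed.

Lemma bq_comp q (th : G -> G) : is_aut th ->
  forall x y, bq (q \o th) x y = bq q (th x) (th y).
Proof. by move=> th_aut x y; rewrite /bq /= aut_add. Qed.

Lemma qlf_comp q (th : G -> G) : qlf q -> is_aut th -> qlf (q \o th).
Proof.
move=> hq th_aut; have bq_th x y : eqQZ (bq (q \o th) x y) (bq q (th x) (th y)).
  by rewrite bq_comp.
by have := lf_congr (lf_comp hq th_aut) bq_th.
Qed.

Definition qodd q x := q x - q (- x).

Definition beta_witness q a := exists qo : G -> rat,
  [/\ quad_linking_form qo, (forall x y, eqQZ (bq qo x y) (bq q x y)) &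
      (forall x, eqQZ (q x) (qshift qo a x))].

Lemma qshift_of_bq q q' : qlf q -> (forall x y, eqQZ (bq q' x y) (bq q x y)) ->
  exists c, forall x, eqQZ (q' x) (qshift q c x).
Proof.
move=> hq bq'q; pose l x := q' x - q x.
have hl : homQZ l by move=> x y; rewrite /l !qaddE bq'q; apply: eqQZ_eq; ring.
have [y|c hc] := lf_dual hq hl (n := 1); first by rewrite mulr1n => ->; apply: homQZ0.
by exists c => x; rewrite /qshift -[q' x](subrK (q x)) -/(l x) hc mulr1n addrC.
Qed.

Lemma qodd_witness q a : qlf q -> beta_witness q a ->
  forall x, eqQZ (qodd q x) (bq q x (a + a)).
Proof.
move=> hq [qo [[_ qo_even] bqo q_qo]] x.
rewrite /qodd !q_qo /qshift !bqo qo_even (lf_Nl hq) (lf_addr hq).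
by apply: eqQZ_eq; ring.
Qed.

Lemma homQZ_qodd q : qlf q -> homQZ (qodd q).
Proof.
move=> hq x y; rewrite /qodd opprD !qaddE (lf_Nl hq) (lf_Nr hq) opprK.
by apply: eqQZ_eq; ring.
Qed.

Lemma beta_witness_exists q : qlf q -> exists a, beta_witness q a.
Proof.
move=> hq; have [|a ha] := lf_dual hq (homQZ_qodd hq) (n := 2).
  by move=> y /eqP; rewrite /qodd mulr2n addr_eq0 => /eqP <-; rewrite subrr.
have h_hom := homQZ_opp (lf_homl hq a).
exists a, (fun x => q x - bq q x a); split.
- split=> [|x]; first exact: qlf_bq hq (bq_addhom q h_hom).
  have -> : q (- x) = q x - qodd q x by rewrite /qodd; ring.
  by rewrite ha (lf_Mnr hq) (lf_Nl hq); apply: eqQZ_eq; rewrite mulr2n; ring.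
- exact: bq_addhom.
- by move=> x; rewrite /qshift bq_addhom // subrK.
Qed.

Lemma betaP q : qlf q -> forall x, eqQZ (qodd q x) (bq q x (beta q)).
Proof.
move=> hq; apply: qodd_witness => //.
exact: epsilon_spec (beta_witness_exists hq).
Qed.

Lemma beta_unique q c : qlf q -> (forall x, eqQZ (qodd q x) (bq q x c)) -> beta q = c.
Proof.
move=> hq hc; apply/eqP; rewrite -subr_eq0; apply/eqP/(lf_eq0 hq) => x.
by rewrite (lf_addr hq) (lf_Nr hq) -(betaP hq) -hc subrr.
Qed.

Lemma beta_congr q q' : qlf q -> (forall x, eqQZ (q' x) (q x)) -> beta q' = beta q.
Proof.
move=> hq qq'; apply: beta_unique => [|x]; first exact: qlf_congr qq'.
by rewrite (bq_congr qq') -(betaP hq) /qodd !qq'.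
Qed.

Lemma beta_qshift q c : qlf q -> beta (qshift q c) = beta q + (c + c).
Proof.
move=> hq; apply: beta_unique => [|x]; first exact: qlf_qshift.
rewrite (bq_qshift _ hq) /qodd /qshift (lf_Nl hq) (lf_addr hq x (beta q)) (lf_addr hq x c).
rewrite -(betaP hq) /qodd.
by apply: eqQZ_eq; ring.
Qed.

Lemma beta_aut q0 q1 (th : G -> G) : is_aut th -> qlf q0 -> qlf q1 ->
  (forall x, eqQZ (q1 (th x)) (q0 x)) -> th (beta q0) = beta q1.
Proof.
move=> th_aut hq0 hq1 q10; have [g _ [thK gK]] := aut_inv th_aut.
apply/esym/beta_unique => // y; rewrite -[y]gK.
rewrite -(bq_comp _ th_aut) (bq_congr q10) -(betaP hq0) /qodd -(autN th_aut).
by rewrite !q10.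
Qed.

Lemma beta_qshift_eq q c : qlf q -> beta (qshift q c) = beta q -> c + c = 0.
Proof. by move=> hq; rewrite beta_qshift // -{2}[beta q]addr0 => /addrI. Qed.

Lemma isometric_iso_pair q0 q1 : qlf q0 -> qlf q1 -> isometric q0 q1 ->
  iso_pair (bq q0) (beta q0) (bq q1) (beta q1).
Proof.
move=> hq0 hq1 [th [th_aut q10]]; exists th; split=> //; last exact: beta_aut.
by move=> x y; rewrite -(bq_comp _ th_aut) (bq_congr q10).
Qed.

Lemma isometric_trans q0 q1 q2 : isometric q0 q1 -> isometric q1 q2 -> isometric q0 q2.
Proof.
move=> [f [f_aut q10]] [g [g_aut q21]]; exists (g \o f).
by split=> [|x /=]; [exact: aut_comp | rewrite q21 q10].
Qed.
End QuadraticFunctions.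

Section GaussSums.
Variable G : finZmodType.
Implicit Types (q : G -> rat).

Lemma GSE q : GS q = \sum_x expiQ (q x).
Proof. by []. Qed.

Lemma GS_congr q q' : (forall x, eqQZ (q' x) (q x)) -> GS q' = GS q.
Proof. by move=> qq'; rewrite !GSE; apply: eq_bigr => x _; rewrite qq'. Qed.

Lemma GS_aut q (th : G -> G) : is_aut th -> GS (q \o th) = GS q.
Proof. by case=> _ /bij_inj th_inj; rewrite !GSE [RHS](reindex_inj th_inj). Qed.

Lemma GS_qshift q c : GS (qshift q c) = expiQ (- q c) * GS q.
Proof.
rewrite !GSE mulr_sumr [RHS](reindex_inj (addIr c)).
by apply: eq_bigr => x _; rewrite qshiftE addrC expiQ_add.
Qed.

Lemma GS_neq0 q : quad_linking_function q -> GS q != 0.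
Proof.
move=> hq; have : GS q * \sum_y expiQ (- q y) = #|G|%:R.
  transitivity (\sum_y \sum_x expiQ (q (x + y) - q y)).
    rewrite GSE mulr_sumr; apply: eq_bigr => y _; rewrite mulr_suml (reindex_inj (addIr y)).
    by apply: eq_bigr => x _; rewrite expiQ_add.
  rewrite exchange_big /=.
  transitivity (\sum_x expiQ (q x) * \sum_y expiQ (bq q x y)).
    apply: eq_bigr => x _; rewrite mulr_sumr; apply: eq_bigr => y _.
    by rewrite qaddE -expiQ_add; congr expiQ; ring.
  rewrite (bigD1 0) //= [X in _ + X]big1 => [|x x0].
    by rewrite (sum_expiQ_lf hq) eqxx (qlf0 hq) expiQ0 mul1r addr0.
  by rewrite (sum_expiQ_lf hq) (negbTE x0) mulr0.
move=> /eqP; apply: contraTneq => ->; rewrite mul0r eq_sym pnatr_eq0 -lt0n.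
by apply/card_gt0P; exists 0.
Qed.

Lemma Kinv_spec q : GS q = `|GS q| * expi (Kinv q).
Proof.
pose P t := 0 <= t < 1 /\ GS q = `|GS q| * expi t.
have [t ht] := polar (GS q).
by have [] := epsilon_spec (inhabits (0 : RR)) P (ex_intro P t ht).
Qed.

Lemma GS_eq_Kinv q q' : `|GS q| = `|GS q'| -> Kinv q = Kinv q' -> GS q = GS q'.
Proof. by move=> GSqq' Kqq'; rewrite Kinv_spec GSqq' Kqq' -Kinv_spec. Qed.

Lemma GS_qshift_eq q c : quad_linking_function q -> GS (qshift q c) = GS q ->
  q c \is a Num.int.
Proof.
move=> hq; rewrite GS_qshift -[X in _ = X]mul1r => /(mulIf (GS_neq0 hq))/expiQ_eq1.
by rewrite rpredN.
Qed.

Lemma isometric_GS q0 q1 : isometric q0 q1 -> GS q0 = GS q1.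
Proof. by case=> th [th_aut q10]; rewrite -(GS_aut q1 th_aut); apply/esym/GS_congr. Qed.

End GaussSums.

Section Flip.
Variables (G : finZmodType) (q : G -> rat) (c : G).
Hypotheses (hq : quad_linking_function q) (c2 : c + c = 0) (qc : q c \is a Num.int).

Local Notation sgn x := (expiQ (bq q x c)).

Definition qflip x := if sgn x == 1 then x else x + c.

Lemma sgnD x y : sgn (x + y) = sgn x * sgn y.
Proof. by rewrite (lf_addl hq) expiQ_add. Qed.

Lemma sgnN1 x : sgn x != 1 -> sgn x = -1.
Proof.
have : sgn x ^+ 2 = 1 by rewrite expr2 -expiQ_add -(lf_addr hq) c2 (lf_0r hq) expiQ0.
by move/eqP; rewrite sqrf_eq1 => /orP[/eqP-> /eqP|/eqP].
Qed.

Lemma sgn_c : sgn c = 1.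
Proof. by rewrite /bq c2 (qlf0 hq) expiQ_int // !rpredB. Qed.

Lemma qflipD : {morph qflip : x y / x + y}.
Proof.
have N1_neq1 : (-1 : RR[i]) == 1 = false.
  by rewrite -subr_eq0 -opprD oppr_eq0 -mulr2n pnatr_eq0.
move=> x y; rewrite /qflip sgnD.
have [->|/sgnN1->] := eqVneq (sgn x) 1; have [->|/sgnN1->] := eqVneq (sgn y) 1.
- by rewrite mulr1 eqxx.
- by rewrite mul1r N1_neq1 addrA.
- by rewrite mulr1 N1_neq1 addrAC.
- by rewrite mulrNN mulr1 eqxx addrACA c2 addr0.
Qed.

Lemma qflipK : involutive qflip.
Proof.
move=> x; rewrite /qflip; have [->|sx1] := eqVneq (sgn x) 1; first by rewrite eqxx.
by rewrite /= sgnD sgn_c mulr1 (negbTE sx1) -addrA c2 addr0.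
Qed.

Lemma qshift_qflip x : eqQZ (qshift q c (qflip x)) (q x).
Proof.
rewrite /qflip; case: eqP => [/expiQ_eq1/eqQZ_int0 bxc|_].
  by rewrite /qshift bxc addr0.
by rewrite qshiftE -addrA c2 addr0 (eqQZ_int0 qc) subr0.
Qed.

Lemma isometric_qshift : isometric q (qshift q c).
Proof.
exists qflip; split=> [|]; last exact: qshift_qflip.
by split; [exact: qflipD | exists qflip; exact: qflipK].
Qed.

End Flip.

Theorem theorem3p5 (G : finZmodType) (q0 q1 : G -> rat) :
  quad_linking_function q0 -> quad_linking_function q1 ->
  (isometric q0 q1 <->
   iso_pair (bq q0) (beta q0) (bq q1) (beta q1) /\ Kinv q0 = Kinv q1).
Proof.
move=> hq0 hq1; split=> [iso01|[[th [th_aut bq10 beta10]] K01]].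
  by split; [exact: isometric_iso_pair | rewrite /Kinv (isometric_GS iso01)].
have hq1th := qlf_comp hq1 th_aut.
have [c q1th_c] : exists c, forall x, eqQZ ((q1 \o th) x) (qshift q0 c x).
  by apply: qshift_of_bq => // x y; rewrite (bq_comp _ th_aut).
have beta_c : beta (qshift q0 c) = beta q0.
  rewrite -(beta_congr (qlf_qshift c hq0) q1th_c); apply: (bij_inj (proj2 th_aut)).
  by rewrite beta10; apply: beta_aut.
have GS_c : GS (qshift q0 c) = GS q0.
  rewrite -(GS_congr q1th_c) GS_aut //; apply: GS_eq_Kinv _ (esym K01).
  by rewrite -(GS_aut _ th_aut) (GS_congr q1th_c) GS_qshift normrM /expiQ norm_expi mul1r.
have iso0c := isometric_qshift hq0 (beta_qshift_eq hq0 beta_c) (GS_qshift_eq hq0 GS_c).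
by apply: isometric_trans iso0c _; exists th.
Qed.
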